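(* Fix integers $k\ge 3$ and $r\ge 1$. For $n\ge 0$ let $d_n$ be the number of words on $[n]^r$ that avoid both $1234$ and $1k(k-1)\cdots 2$. Then the sequence $(d_n)_{n\ge0}$ satisfies a linear recurrence with constant coefficients; equivalently, $\sum_{n\ge 0} d_n x^n$ is a rational function of $x$.
   Context: A word on $[n]^r$ is a word in which each letter $1,2,\dots,n$ appears exactly $r$ times and no other letter appears (for $r=1$ these are the permutations of $[n]$). A word $w_1\cdots w_m$ contains a pattern $p_1\cdots p_k$ if there are indices $i_1<\dots<i_k$ such that for all $r,s$: $w_{i_r}<w_{i_s}\iff p_r<p_s$ and $w_{i_r}>w_{i_s}\iff p_r>p_s$; otherwise it avoids it. The pattern $1k(k-1)\cdots 2$ is $1$ followed by $k,k-1,\dots,2$. *)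

From mathcomp Require Import all_boot all_order all_algebra.
Set Implicit Arguments. Unset Strict Implicit. Unset Printing Implicit Defensive.
Import GRing.Theory.

Definition base_word (n r : nat) : seq nat :=
  flatten [seq nseq r i | i <- iota 1 n].

Definition is_word (n r : nat) (w : seq nat) : bool :=
  perm_eq (base_word n r) w.

Definition words (n r : nat) : seq (seq nat) := permutations (base_word n r).

(* w contains p: some subsequence of w (selected by a mask, i.e. by indices
   i_1 < ... < i_k) is order-isomorphic to p. The comparison is checked for all
   ordered pairs (a,b), which covers both the "<" and ">" conditions. *)
Definition contains (w p : seq nat) : bool :=
  [exists m : (size w).-tuple bool,
     let s := mask m w in
     (size s == size p) &&
     all (fun a => all (fun b => (nth 0 s a < nth 0 s b) == (nth 0 p a < nth 0 p b))
                       (iota 0 (size p)))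
         (iota 0 (size p))]%N.

Definition avoids (w p : seq nat) : bool := ~~ contains w p.

Definition pat1234 : seq nat := [:: 1; 2; 3; 4]%N.

Definition pat1k (k : nat) : seq nat := 1%N :: rev (iota 2 k.-1).

Definition d (k r n : nat) : nat :=
  count (fun w => avoids w pat1234 && avoids w (pat1k k)) (words n r).

Definition linear_recurrent (u : nat -> nat) : Prop :=
  exists (m N : nat) (c : seq rat), size c = m /\
    forall n, (N <= n)%N ->
      ((u (n + m)%N)%:R = \sum_(i < m) c`_i * (u (n + i)%N)%:R :> rat)%R.

From mathcomp Require Import all_boot all_order all_algebra zify.
Set Implicit Arguments. Unset Strict Implicit. Unset Printing Implicit Defensive.
Import GRing.Theory.

(* Every word on [n+1]^r arises uniquely from a word u on [n]^r, shifted up by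
   one, by inserting the r copies of the new least letter 1 at the positions
   marked by a mask m.  Since both patterns 1234 and 1k(k-1)...2 start with
   their least letter, the new word avoids them iff u does and the part of u
   after the first inserted 1 avoids 234 and k(k-1)...2.  By an
   Erdős–Szekeres type bound, a word with at most r copies of each letter
   avoiding an increasing pattern of length a and a decreasing one of length b
   has fewer than r 2^(a+b) letters; so only the last B = r 2^(k+2) letters of
   u matter.  Classifying admissible words by the standardized pattern of their
   last B letters gives finitely many states, and the number of ways to pass
   from one state to another does not depend on n.  Hence the state counts
   evolve by a fixed matrix, and Cayley–Hamilton yields the recurrence. *)

Section LinearRecurrences.
Local Open Scope ring_scope.

Lemma horner_mx_coef (R : comNzRingType) (n : nat) (A : 'M[R]_n.+1) (p : {poly R}) :
  horner_mx A p = \sum_(i < size p) p`_i *: A ^+ i.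
Proof.
rewrite -{1}(coefK p) poly_def linear_sum /=.
by apply: eq_bigr => i _; rewrite linearZ /= rmorphXn /= horner_mx_X.
Qed.

(* Cayley–Hamilton: a sequence eventually read off the powers of a fixed square
   matrix by a fixed linear functional satisfies a linear recurrence. *)
Lemma linear_recurrent_of_powers (M N : nat) (A : 'M[rat]_M.+1)
    (y : 'rV[rat]_M.+1) (x : 'cV[rat]_M.+1) (u : nat -> nat) :
  (forall t, (u (N + t)%N)%:R = (y *m A ^+ t *m x) 0 0) -> linear_recurrent u.
Proof.
move=> uE; pose p := char_poly A.
have size_p : size p = M.+2 by rewrite size_char_poly.
have lead_p : p`_M.+1 = 1.
  by have /monicP := char_poly_monic A; rewrite lead_coefE size_p.
have CH : \sum_(i < M.+2) p`_i *: A ^+ i = 0.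
  by rewrite -size_p -horner_mx_coef Cayley_Hamilton.
exists M.+1, N, (mkseq (fun i => - p`_i) M.+1); split; first by rewrite size_mkseq.
move=> n /subnKC <-; set t := (n - N)%N.
have char_rel : \sum_(i < M.+2) p`_i * (u (N + t + i)%N)%:R = 0.
  transitivity ((y *m (A ^+ t *m \sum_(i < M.+2) p`_i *: A ^+ i) *m x) 0 0).
    rewrite !mulmx_sumr mulmx_suml summxE; apply: eq_bigr => i _.
    by rewrite -addnA uE exprD -mulmxE -!scalemxAr -scalemxAl [RHS]mxE.
  by rewrite CH !mulmx0 mul0mx mxE.
rewrite big_ord_recr /= lead_p mul1r in char_rel.
move/eqP: char_rel; rewrite addrC addr_eq0 => /eqP ->.
by rewrite -sumrN; apply: eq_bigr => i _; rewrite nth_mkseq // mulNr.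
Qed.

Lemma linear_recurrent_of_transfer (T : eqType) (S : seq T) (F : nat -> T -> nat)
    (A : T -> T -> nat) (u : nat -> nat) (N : nat) :
  (forall n, (N <= n)%N -> u n = (\sum_(s <- S) F n s)%N) ->
  (forall n, (N <= n)%N -> forall t, t \in S ->
     F n.+1 t = (\sum_(s <- S) F n s * A s t)%N) ->
  linear_recurrent u.
Proof.
case: S => [|s0 S'] uE FE.
  by exists 0, N, [::]; split => // n Nn; rewrite addn0 big_ord0 uE // big_nil.
set S := s0 :: S'; pose M := size S'.
have sumS G : (\sum_(s <- S) G s = \sum_(i < M.+1) G (nth s0 S i))%N.
  by rewrite (big_nth s0) big_mkord.
pose Amx : 'M[rat]_M.+1 := \matrix_(i, j) (A (nth s0 S j) (nth s0 S i))%:R.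
pose v n : 'cV[rat]_M.+1 := \col_i (F n (nth s0 S i))%:R.
have v_step n : (N <= n)%N -> v n.+1 = Amx *m v n.
  move=> Nn; apply/matrixP => i j; rewrite !mxE FE ?mem_nth // sumS natr_sum.
  by apply: eq_bigr => l _; rewrite !mxE natrM mulrC.
have v_pow t : v (N + t)%N = Amx ^+ t *m v N.
  elim: t => [|t IH]; first by rewrite addn0 expr0 mul1mx.
  by rewrite addnS v_step ?leq_addr // IH exprS mulmxA mulmxE.
apply: (@linear_recurrent_of_powers M N Amx (const_mx 1) (v N)) => t.
rewrite -mulmxA -v_pow uE ?leq_addr // sumS natr_sum mxE.
by apply: eq_bigr => i _; rewrite !mxE mul1r.
Qed.

End LinearRecurrences.

Definition order_agree (x y : nat * nat) : bool := (x.1 < y.1) == (x.2 < y.2).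

Definition order_iso (s p : seq nat) : bool := allrel order_agree (zip s p) (zip s p).

Lemma order_iso_nthE (s p : seq nat) : size s = size p ->
  all (fun a => all (fun b => (nth 0 s a < nth 0 s b) == (nth 0 p a < nth 0 p b))
                    (iota 0 (size p))) (iota 0 (size p)) = order_iso s p.
Proof.
move=> eq_size; have size_zip_sp : size (zip s p) = size p.
  by rewrite size_zip eq_size minnn.
apply/idP/allrelP.
- move/allP => H x y /(nthP (0,0)) [i lt_i <-] /(nthP (0,0)) [j lt_j <-].
  rewrite size_zip_sp in lt_i lt_j; rewrite !nth_zip //.
  have := H i; rewrite mem_iota lt_i => /(_ isT) /allP /(_ j).
  by rewrite mem_iota lt_j => /(_ isT).
- move=> H; apply/allP => a; rewrite mem_iota => /andP [_ lt_a].
  apply/allP => b; rewrite mem_iota => /andP [_ lt_b].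
  rewrite -size_zip_sp in lt_a lt_b.
  by have := H _ _ (mem_nth (0,0) lt_a) (mem_nth (0,0) lt_b); rewrite !nth_zip.
Qed.

Lemma containsP (w p : seq nat) :
  reflect (exists s, [/\ subseq s w, size s = size p & order_iso s p]) (contains w p).
Proof.
apply: (iffP existsP).
- case=> m /andP [/eqP size_s iso_s]; exists (mask m w); split => //.
    exact: mask_subseq.
  by rewrite -order_iso_nthE.
- case=> s [/subseqP [m size_m ->] size_s iso_s].
  have size_m' : size m == size w by apply/eqP.
  by exists (Tuple size_m'); rewrite /= size_s eqxx /= order_iso_nthE.
Qed.

Lemma contains_nil (w : seq nat) : contains w [::].
Proof. by apply/containsP; exists [::]; split => //; apply: sub0seq. Qed.

Lemma contains_subseq (w1 w2 p : seq nat) :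
  subseq w1 w2 -> contains w1 p -> contains w2 p.
Proof.
move=> sub12 /containsP [s [sub_s size_s iso_s]]; apply/containsP.
by exists s; split => //; apply: subseq_trans sub12.
Qed.

Lemma zip_map2 (f g : nat -> nat) (s p : seq nat) :
  zip (map f s) (map g p) = map (fun z => (f z.1, g z.2)) (zip s p).
Proof. by elim: s p => [|x s IH] [|y p] //=; rewrite IH. Qed.

Lemma mem_zip_pair (z : nat * nat) (s p : seq nat) :
  z \in zip s p -> z.1 \in s /\ z.2 \in p.
Proof.
elim: s p => [|x s IH] [|y p] //=; rewrite in_cons => /orP [/eqP -> | /IH [h1 h2]].
  by rewrite !mem_head.
by rewrite !in_cons h1 h2 !orbT.
Qed.

Lemma order_iso_map (f g : nat -> nat) (s p : seq nat) :
  {in s &, {mono f : x y / x < y}} -> {in p &, {mono g : x y / x < y}} ->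
  order_iso (map f s) (map g p) = order_iso s p.
Proof.
move=> f_mono g_mono; rewrite /order_iso zip_map2 allrel_mapl allrel_mapr.
apply: (@eq_in_allrel _ _ (mem (zip s p)) (mem (zip s p))); last 2 first.
- by apply/allP.
- by apply/allP.
move=> z1 z2 /mem_zip_pair [s1 p1] /mem_zip_pair [s2 p2].
by rewrite /order_agree /= f_mono ?g_mono.
Qed.

Lemma order_iso_mapl (f : nat -> nat) (s p : seq nat) :
  {in s &, {mono f : x y / x < y}} -> order_iso (map f s) p = order_iso s p.
Proof.
by move=> f_mono; rewrite -[in LHS](map_id p) order_iso_map.
Qed.

Lemma order_iso_mapr (g : nat -> nat) (s p : seq nat) :
  {in p &, {mono g : x y / x < y}} -> order_iso s (map g p) = order_iso s p.
Proof.
by move=> g_mono; rewrite -[in LHS](map_id s) order_iso_map.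
Qed.

Lemma contains_mapl (f : nat -> nat) (w p : seq nat) :
  {in w &, {mono f : x y / x < y}} -> contains (map f w) p = contains w p.
Proof.
move=> f_mono; apply/containsP/containsP.
- case=> s [/subseqP [m size_m ->] size_s iso_s].
  rewrite -map_mask size_map in size_s iso_s.
  exists (mask m w); split => //; first exact: mask_subseq.
  rewrite order_iso_mapl // in iso_s.
  by move=> x y /mem_mask x_w /mem_mask y_w; apply: f_mono.
- case=> s [sub_s size_s iso_s]; exists (map f s); split.
  + exact: map_subseq.
  + by rewrite size_map.
  + by rewrite order_iso_mapl // => x y /(mem_subseq sub_s) x_w /(mem_subseq sub_s); apply: f_mono.
Qed.

Lemma contains_mapr (g : nat -> nat) (w p : seq nat) :
  {in p &, {mono g : x y / x < y}} -> contains w (map g p) = contains w p.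
Proof.
move=> g_mono.
by apply/containsP/containsP => -[s [sub_s size_s iso_s]]; exists s;
  move: size_s iso_s; rewrite size_map order_iso_mapr.
Qed.

Lemma order_iso_cons (y c : nat) (s q : seq nat) : order_iso (y :: s) (c :: q) =
  [&& all (order_agree (y, c)) (zip s q), all (order_agree^~ (y, c)) (zip s q)
    & order_iso s q].
Proof. by rewrite /order_iso /= allrel_cons2 /order_agree /= !ltnn eqxx. Qed.

Lemma contains_cons_extend (x c : nat) (s t q : seq nat) :
  subseq t s -> size t = size q -> order_iso t q ->
  (forall z, z \in zip t q -> order_agree (x, c) z && order_agree z (x, c)) ->
  contains (x :: s) (c :: q).
Proof.
move=> sub_t size_t iso_t agree; apply/containsP; exists (x :: t); split.
- by rewrite /= eqxx.
- by rewrite /= size_t.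
- rewrite order_iso_cons iso_t andbT.
  by apply/andP; split; apply/allP => z /agree /andP [].
Qed.

Fixpoint insert_ones (m : bitseq) (v : seq nat) : seq nat :=
  match m with
  | [::] => v
  | b :: m' => if b then 1 :: insert_ones m' v
               else if v is y :: v' then y :: insert_ones m' v' else insert_ones m' [::]
  end.

Lemma insert_ones_nseq (c : nat) (m : bitseq) (v : seq nat) :
  insert_ones (nseq c false ++ m) v = take c v ++ insert_ones m (drop c v).
Proof. by elim: c v => [|c IH] [|y v] /=; rewrite ?take0 ?drop0 // IH. Qed.

Lemma filter_insert_ones (m : bitseq) (v : seq nat) :
  1 \notin v -> filter (predC1 1) (insert_ones m v) = v.
Proof.
elim: m v => [|b m IH] v v1 /=.
  by apply/all_filterP/allP => x x_v /=; apply: contraNneq v1 => <-.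
case: b => /=; first exact: IH.
case: v v1 => [|y v] v1 /=; first exact: IH.
by move: v1; rewrite in_cons negb_or eq_sym => /andP [/negbTE -> /IH ->].
Qed.

Lemma perm_insert_ones (m : bitseq) (v : seq nat) :
  perm_eq (insert_ones m v) (nseq (count id m) 1 ++ v).
Proof.
elim: m v => [|b m IH] v /=; first exact: perm_refl.
case: b => /=; first by rewrite perm_cons.
case: v => [|y v]; first exact: IH.
rewrite add0n perm_sym -cat1s perm_catCA /= perm_cons perm_sym.
exact: IH.
Qed.

Lemma mem_insert_ones (m : bitseq) (v : seq nat) (x : nat) :
  x \in insert_ones m v -> x = 1 \/ x \in v.
Proof.
rewrite (perm_mem (perm_insert_ones m v)) mem_cat => /orP [/nseqP [-> _]|]; by [left|right].
Qed.

Lemma map_insert_ones (g : nat -> nat) (m : bitseq) (v : seq nat) :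
  g 1 = 1 -> map g (insert_ones m v) = insert_ones m (map g v).
Proof.
move=> g1; elim: m v => [|b m IH] v //=.
by case: b => /=; [rewrite g1 IH | case: v => [|y v] /=; rewrite IH].
Qed.

Lemma insert_ones_split (w : seq nat) :
  insert_ones (map (pred1 1) w) (filter (predC1 1) w) = w.
Proof. by elim: w => [|x w IH] //=; case: eqP => [-> | _] /=; rewrite IH. Qed.

Lemma ones_of_insert_ones (m : bitseq) (v : seq nat) :
  1 \notin v -> count negb m = size v -> map (pred1 1) (insert_ones m v) = m.
Proof.
elim: m v => [|b m IH] v v1 /=; first by case: v {v1}.
case: b => /= [count_m|]; first by rewrite IH.
case: v v1 => [|y v] //=; rewrite in_cons negb_or => /andP [y1 v1] [count_m].
by rewrite IH // eq_sym (negbTE y1).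
Qed.

Lemma mask_first_true (m : bitseq) : true \in m ->
  m = nseq (index true m) false ++ true :: drop (index true m).+1 m.
Proof.
elim: m => [|b m IH] //=; case: b => /=; first by rewrite drop0.
by rewrite in_cons /= => /IH {1}->.
Qed.

Lemma insert_ones_first (m : bitseq) (v : seq nat) : true \in m ->
  insert_ones m v =
  take (index true m) v ++ 1 :: insert_ones (drop (index true m).+1 m) (drop (index true m) v).
Proof. by move=> /mask_first_true {1}->; rewrite insert_ones_nseq. Qed.

Lemma subseq_cons_skip (x : nat) (s X t : seq nat) : x \notin X ->
  subseq (x :: s) (X ++ t) = subseq (x :: s) t.
Proof.
elim: X => [|y X IH] //=; rewrite in_cons negb_or => /andP [x_y x_X].
by rewrite (negbTE x_y) IH.
Qed.

Section InsertOnes.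

Variables (c : nat) (q : seq nat) (m : bitseq) (v : seq nat).
Hypothesis c_least : all (fun e => c < e) q.
Hypothesis v_gt1 : all (fun x => 1 < x) v.
Hypothesis m_true : true \in m.

Let j := index true m.

Lemma one_notin_v : 1 \notin v.
Proof. by apply/negP => /(allP v_gt1); rewrite ltnn. Qed.

Lemma one_notin_tail (i : nat) : 1 \notin drop i v.
Proof. by apply: contra one_notin_v; apply: mem_drop. Qed.

Lemma tail_subseq_after_first_one :
  subseq (drop j v) (insert_ones (drop j.+1 m) (drop j v)).
Proof.
by rewrite -{1}(@filter_insert_ones (drop j.+1 m) (drop j v)) ?filter_subseq ?one_notin_tail.
Qed.

(* An occurrence of c :: q either avoids the inserted 1s, or its first letter
   is a 1, which may be taken to be the first one. *)
Lemma contains_insert_ones_cases :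
  contains (insert_ones m v) (c :: q) ->
  contains v (c :: q) || contains (drop j v) q.
Proof.
move/containsP => [s [sub_s size_s iso_s]].
case one_s: (1 \in s); last first.
  apply/orP; left; apply/containsP; exists s; split => //.
  rewrite -(filter_insert_ones m one_notin_v) subseq_filter sub_s andbT.
  by apply/allP => x x_s /=; apply: contraFneq one_s => <-.
apply/orP; right.
case: s sub_s size_s iso_s one_s => [|y s] // sub_s [size_s] iso_s one_s.
rewrite order_iso_cons in iso_s; case/and3P: iso_s => agree_y _ iso_s.
have y_pos : 1 <= y.
  case: (mem_insert_ones (mem_subseq sub_s (mem_head y s))) => [->//|/(allP v_gt1)].
  exact: ltnW.
(* the letters of s exceed y, as q's letters exceed c *)
have one_s' : 1 \notin s.
  apply/negP => /(nthP 0) [i lt_i si1].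
  have lt_iz : i < size (zip s q) by rewrite size_zip size_s minnn -size_s.
  have := allP agree_y _ (mem_nth (0,0) lt_iz).
  rewrite nth_zip // si1 /order_agree /= (allP c_least) ?mem_nth -?size_s //.
  by rewrite ltnNge y_pos.
have y1 : y = 1 by move: one_s; rewrite in_cons (negbTE one_s') orbF => /eqP.
subst y; apply/containsP; exists s; split => //.
have one_take : 1 \notin take j v by apply: contra one_notin_v; apply: mem_take.
rewrite insert_ones_first // subseq_cons_skip //= in sub_s.
rewrite -(@filter_insert_ones (drop j.+1 m) (drop j v)) ?one_notin_tail //.
rewrite subseq_filter sub_s andbT.
by apply/allP => x x_s /=; apply: contraNneq one_s' => <-.
Qed.

Lemma contains_insert_ones_tail :
  contains (drop j v) q -> contains (insert_ones m v) (c :: q).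
Proof.
move/containsP => [s [sub_s size_s iso_s]].
have s_gt1 z : z \in s -> 1 < z.
  by move/(mem_subseq sub_s)/mem_drop; apply: (allP v_gt1).
apply: (@contains_subseq (1 :: drop j v)).
  rewrite insert_ones_first //; apply: subseq_trans (suffix_subseq _ _) => /=.
  exact: tail_subseq_after_first_one.
apply: contains_cons_extend sub_s size_s iso_s _ => z /mem_zip_pair [z_s z_q].
have := s_gt1 _ z_s; have := allP c_least _ z_q; rewrite /order_agree /= => c_z2 one_z1.
by apply/andP; split; apply/eqP; lia.
Qed.

Lemma contains_insert_ones :
  contains (insert_ones m v) (c :: q) = contains v (c :: q) || contains (drop j v) q.
Proof.
apply/idP/orP => [/contains_insert_ones_cases/orP //|[|]].
- apply: contains_subseq.
  by rewrite -{1}(filter_insert_ones m one_notin_v) filter_subseq.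
- exact: contains_insert_ones_tail.
Qed.

End InsertOnes.

Lemma size_split_at (x : nat) (s : seq nat) :
  size s = count (fun z => x < z) s + count (fun z => z < x) s + count_mem x s.
Proof.
elim: s => [|y s IH] //=; rewrite IH.
by case: (ltngtP x y) => [lt_xy|lt_yx|->] /=; rewrite ?eqxx ?(gtn_eqF lt_xy) ?(ltn_eqF lt_yx); lia.
Qed.

Lemma rev_iotaS (m n : nat) : rev (iota m n.+1) = (m + n) :: rev (iota m n).
Proof. by rewrite -addn1 iotaD rev_cat. Qed.

Lemma avoid_increasing_above (x a : nat) (s : seq nat) :
  ~~ contains (x :: s) (iota 1 a.+1) ->
  ~~ contains (filter (fun z => x < z) s) (iota 1 a).
Proof.
apply: contraNN; rewrite -(@contains_mapr (addn 1)); last by move=> ? ? _ _; rewrite ltn_add2l.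
rewrite -iotaDl => /containsP [t [sub_t size_t iso_t]].
apply: (contains_cons_extend (subseq_trans sub_t (filter_subseq _ _))) => // z.
move=> /mem_zip_pair [/(mem_subseq sub_t)]; rewrite mem_filter => /andP [x_z _].
by rewrite mem_iota /order_agree /= x_z => /andP [lt_z _]; apply/andP; split; apply/eqP; lia.
Qed.

Lemma avoid_decreasing_below (x b : nat) (s : seq nat) :
  ~~ contains (x :: s) (rev (iota 1 b.+1)) ->
  ~~ contains (filter (fun z => z < x) s) (rev (iota 1 b)).
Proof.
apply: contraNN => /containsP [t [sub_t size_t iso_t]]; rewrite rev_iotaS add1n.
apply: (contains_cons_extend (subseq_trans sub_t (filter_subseq _ _))) => // z.
move=> /mem_zip_pair [/(mem_subseq sub_t)]; rewrite mem_filter => /andP [z_x _].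
by rewrite mem_rev mem_iota /order_agree /= z_x => /andP [_ z_b]; apply/andP; split; apply/eqP; lia.
Qed.

Lemma size_avoiding_bound (r a b : nat) (s : seq nat) :
  (forall y, count_mem y s <= r) ->
  ~~ contains s (iota 1 a) -> ~~ contains s (rev (iota 1 b)) ->
  size s + r <= r * 2 ^ (a + b).
Proof.
elim: a b s => [|a IHa] b s; first by rewrite contains_nil.
elim: b s => [|b IHb] s; first by rewrite contains_nil.
case: s => [|x s] count_s inc_s dec_s.
  by rewrite /= add0n leq_pmulr // expn_gt0.
have count_filter P y : count_mem y (filter P s) <= r.
  apply: leq_trans (count_s y); apply: leq_trans (leq_count_subseq _ (filter_subseq P s)) _.
  by rewrite /= leq_addl.
have above := IHa b.+1 _ (count_filter _) (avoid_increasing_above inc_s)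
  (contraNN (contains_subseq (subseq_trans (filter_subseq _ _) (subseq_cons s x))) dec_s).
have below := IHb _ (count_filter _)
  (contraNN (contains_subseq (subseq_trans (filter_subseq _ _) (subseq_cons s x))) inc_s)
  (avoid_decreasing_below dec_s).
have count_x : count_mem x s + 1 <= r by have := count_s x; rewrite /= eqxx add1n addnC.
rewrite !size_filter in above below; rewrite /= (size_split_at x s).
move: above below count_x; rewrite !addnS !addSn !expnS; set X := 2 ^ (a + b); nia.
Qed.

Lemma base_word_succ (n r : nat) : base_word n.+1 r = nseq r 1 ++ map S (base_word n r).
Proof.
rewrite /base_word -[iota 1 n.+1]/(1 :: iota 2 n) (iotaDl 1 1) /=; congr (_ ++ _).
by elim: (iota 1 n) => [|x l IH] //=; rewrite map_cat map_nseq IH.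
Qed.

Lemma count_base_word (n r y : nat) :
  count_mem y (base_word n r) = if 1 <= y <= n then r else 0.
Proof.
elim: n y => [|n IH] y; first by rewrite /base_word /=; case: ifP => //; lia.
rewrite base_word_succ count_cat count_nseq count_map.
have -> : count (preim S (pred1 y)) (base_word n r) = count_mem y.-1 (base_word n r).
  case: y => [|y]; last exact: eq_count.
  by rewrite IH (@eq_count _ _ pred0) ?count_pred0.
by rewrite IH; case: y => [|[|y]] /=; rewrite ?mul1n ?mul0n ?addn0 ?ltnS.
Qed.

Lemma size_base_word (n r : nat) : size (base_word n r) = n * r.
Proof. by elim: n => [|n IH] //; rewrite base_word_succ size_cat size_nseq size_map IH. Qed.

Lemma mem_words (n r : nat) (w : seq nat) : (w \in words n r) = perm_eq w (base_word n r).
Proof. by rewrite /words mem_permutations. Qed.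

Lemma word_props (n r : nat) (u : seq nat) : u \in words n r ->
  [/\ size u = n * r, forall y, count_mem y u <= r & all (fun x => 0 < x) u].
Proof.
rewrite mem_words => perm_u; split.
- by rewrite (perm_size perm_u) size_base_word.
- by move=> y; rewrite (permP perm_u) count_base_word; case: ifP.
- apply/allP => x x_u; move: (x_u); rewrite (perm_mem perm_u) -has_pred1 has_count.
  by rewrite count_base_word; case: x x_u.
Qed.

Fixpoint masks (L t : nat) : seq bitseq :=
  match L with
  | 0 => if t == 0 then [:: [::]] else [::]
  | L'.+1 => (if t is t'.+1 then map (cons true) (masks L' t') else [::])
             ++ map (cons false) (masks L' t)
  end.

Lemma mem_map_cons (b b' : bool) (m : bitseq) (l : seq bitseq) :
  (b :: m \in map (cons b') l) = (b == b') && (m \in l).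
Proof.
elim: l => [|x l IH] /=; first by rewrite andbF.
by rewrite !in_cons eqseq_cons IH -andb_orr.
Qed.

Lemma mem_masks (L t : nat) (m : bitseq) :
  (m \in masks L t) = (size m == L) && (count id m == t).
Proof.
elim: L t m => [|L IH] t m /=; first by case: t; case: m.
case: m => [|b m]; rewrite mem_cat.
  by case: t => [|t] /=; apply/negbTE; rewrite ?orFb; apply/negP;
    [|case/orP]; case/mapP.
rewrite /= eqSS.
by case: t => [|t]; case: b => /=; rewrite ?mem_map_cons ?IH ?andbF ?orbF ?add1n ?eqSS.
Qed.

Lemma uniq_masks (L t : nat) : uniq (masks L t).
Proof.
elim: L t => [|L IH] t /=; first by case: t.
rewrite cat_uniq map_inj_uniq ?IH; last by move=> x y [].
case: t => [|t] /=; first by rewrite andbT; apply/hasPn.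
rewrite map_inj_uniq ?IH; last by move=> x y [].
by rewrite andbT /=; apply/hasPn => x /mapP [y _ ->]; rewrite mem_map_cons.
Qed.

Lemma mask_true_mem (m : bitseq) : 0 < count id m -> true \in m.
Proof. by rewrite -has_count => /hasP [b b_m]; case: b b_m. Qed.

Lemma count_negb (m : bitseq) : count negb m = size m - count id m.
Proof. by rewrite -(count_predC id m) addKn. Qed.

Lemma one_notin_shift (u : seq nat) : all (fun x => 0 < x) u -> 1 \notin map S u.
Proof. by move=> u_pos; apply/negP => /mapP [[|x] /(allP u_pos)]. Qed.

Lemma insert_ones_word (n r : nat) (u : seq nat) (m : bitseq) :
  u \in words n r -> m \in masks (n * r + r) r -> insert_ones m (map S u) \in words n.+1 r.
Proof.
rewrite mem_masks !mem_words => perm_u /andP [_ /eqP count_m].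
apply: perm_trans (perm_insert_ones _ _) _.
by rewrite count_m base_word_succ perm_cat2l perm_map.
Qed.

Lemma insert_ones_inj (n r : nat) (u1 u2 : seq nat) (m1 m2 : bitseq) :
  u1 \in words n r -> u2 \in words n r ->
  m1 \in masks (n * r + r) r -> m2 \in masks (n * r + r) r ->
  insert_ones m1 (map S u1) = insert_ones m2 (map S u2) -> u1 = u2 /\ m1 = m2.
Proof.
move=> /word_props [size_u1 _ pos_u1] /word_props [size_u2 _ pos_u2].
rewrite !mem_masks => /andP [/eqP size_m1 /eqP count_m1] /andP [/eqP size_m2 /eqP count_m2].
have ones_m (m : bitseq) u : size m = n * r + r -> count id m = r -> size u = n * r ->
    all (fun x => 0 < x) u -> map (pred1 1) (insert_ones m (map S u)) = m.
  move=> size_m count_m size_u pos_u; rewrite ones_of_insert_ones ?one_notin_shift //.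
  by rewrite count_negb size_map size_m count_m size_u addnK.
move=> eq_w; have eq_m : m1 = m2.
  by rewrite -(ones_m m1 u1) // eq_w ones_m.
split=> //; apply: (inj_map succn_inj).
by rewrite -(filter_insert_ones m1 (one_notin_shift pos_u1)) eq_w filter_insert_ones ?one_notin_shift.
Qed.

Lemma word_decompose (n r : nat) (w : seq nat) : w \in words n.+1 r ->
  exists2 u, u \in words n r &
    exists2 m, m \in masks (n * r + r) r & w = insert_ones m (map S u).
Proof.
move=> w_word; have [size_w count_w pos_w] := word_props w_word.
move: w_word; rewrite mem_words => perm_w.
exists (map predn (filter (predC1 1) w)); last exists (map (pred1 1) w); last first.
  rewrite -map_comp.
  have -> : [seq (succn \o predn) x | x <- filter (predC1 1) w] = filter (predC1 1) w.
    rewrite -[RHS]map_id; apply/eq_in_map => x; rewrite mem_filter => /andP [_ x_w].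
    by rewrite /= prednK // (allP pos_w).
  by rewrite insert_ones_split.
- rewrite mem_masks size_map size_w mulSn addnC eqxx /=.
  by rewrite count_map (permP perm_w) count_base_word.
- rewrite mem_words.
  have := perm_filter (predC1 1) perm_w; rewrite base_word_succ filter_cat.
  have -> : filter (predC1 1) (nseq r 1) = [::] by elim: (r) => //= r' ->.
  have -> : filter (predC1 1) (map S (base_word n r)) = map S (base_word n r).
    apply/all_filterP/allP => x /mapP [y y_base ->] /=.
    by apply/eqP => -[y0]; move: y_base; rewrite y0 -has_pred1 has_count count_base_word.
  move=> /= /(perm_map predn); rewrite -map_comp map_id.
  by apply: perm_trans; apply: perm_map.
Qed.

Lemma words_succ (n r : nat) : perm_eq (words n.+1 r)
  [seq insert_ones m (map S u) | u <- words n r, m <- masks (n * r + r) r].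
Proof.
apply: uniq_perm; first exact: permutations_uniq.
- apply: allpairs_uniq; [exact: permutations_uniq | exact: uniq_masks |].
  move=> [u1 m1] [u2 m2] /allpairsP [[u1' m1'] [/= u1_w m1_m [-> ->]]].
  move=> /allpairsP [[u2' m2'] [/= u2_w m2_m [-> ->]]] /= eq_w.
  by case: (insert_ones_inj u1_w u2_w m1_m m2_m eq_w) => -> ->.
- move=> w; apply/idP/allpairsP => [/word_decompose [u u_w [m m_m ->]]|].
    by exists (u, m).
  by case=> -[u m] [/= u_w m_m ->]; apply: insert_ones_word.
Qed.

(* The last B letters of w (all of w if it is shorter). *)
Definition window (B : nat) (w : seq nat) : seq nat := drop (size w - B) w.

Definition rank_in (v : seq nat) (x : nat) : nat := (count (fun y => y < x) (undup v)).+1.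

Definition standardize (v : seq nat) : seq nat := map (rank_in v) v.

Lemma window_map (B : nat) (g : nat -> nat) (w : seq nat) :
  window B (map g w) = map g (window B w).
Proof. by rewrite /window size_map map_drop. Qed.

Lemma size_window (B : nat) (w : seq nat) : B <= size w -> size (window B w) = B.
Proof. by move=> le_B; rewrite /window size_drop subKn. Qed.

Lemma window_cat (B : nat) (X Y : seq nat) : B <= size Y -> window B (X ++ Y) = window B Y.
Proof.
move=> le_B; rewrite /window drop_cat size_cat.
by case: ifP => [|_]; [lia | congr drop; lia].
Qed.

Lemma count_lt_mem_le (x y : nat) (s : seq nat) : x < y ->
  count (fun z => z < x) s + count_mem x s <= count (fun z => z < y) s.
Proof.
move=> lt_xy; elim: s => [|z s IH] //=; rewrite addnACA leq_add //.
by case: (ltngtP z x) => [lt_zx|//|->]; rewrite ?lt_xy ?(ltn_trans lt_zx lt_xy).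
Qed.

Lemma rank_in_mono (v : seq nat) : {in v &, {mono rank_in v : x y / x < y}}.
Proof.
move=> x y x_v y_v; rewrite /rank_in ltnS.
case: (ltnP x y) => [lt_xy|le_yx].
  have := count_lt_mem_le (undup v) lt_xy.
  by rewrite count_uniq_mem ?undup_uniq // mem_undup x_v /=; lia.
by apply/negbTE; rewrite -leqNgt; apply: sub_count => z /= /leq_trans; apply.
Qed.

Lemma rank_in_bound (v : seq nat) (x : nat) : x \in v -> 0 < rank_in v x <= size v.
Proof.
move=> x_v; rewrite /rank_in ltn0Sn /=; apply: leq_trans (size_undup v).
rewrite -(count_predC (fun y => y < x) (undup v)) -addn1 leq_add2l -has_count.
by apply/hasP; exists x; rewrite ?mem_undup //= ltnn.
Qed.

Lemma undup_map_in (g : nat -> nat) (v : seq nat) : {in v &, injective g} ->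
  undup (map g v) = map g (undup v).
Proof.
elim: v => [|x v IH] g_inj //=.
have g_inj' : {in v &, injective g}.
  by move=> a b a_v b_v; apply: g_inj; rewrite in_cons ?a_v ?b_v orbT.
have -> : (g x \in map g v) = (x \in v).
  apply/mapP/idP => [[y y_v gxy]|x_v]; last by exists x.
  by rewrite (g_inj x y) ?mem_head // in_cons y_v orbT.
by case: (x \in v) => /=; rewrite IH.
Qed.

Lemma standardize_map (g : nat -> nat) (v : seq nat) :
  {in v &, {mono g : x y / x < y}} -> standardize (map g v) = standardize v.
Proof.
move=> g_mono.
have g_inj : {in v &, injective g}.
  move=> x y x_v y_v gxy; case: (ltngtP x y) => // [lt_xy|lt_yx].
    by have := g_mono x y x_v y_v; rewrite gxy ltnn lt_xy.
  by have := g_mono y x y_v x_v; rewrite gxy ltnn lt_yx.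
rewrite /standardize -map_comp; apply/eq_in_map => x x_v /=.
rewrite /rank_in undup_map_in // count_map; congr _.+1.
by apply: eq_in_count => z; rewrite mem_undup => z_v /=; apply: g_mono.
Qed.

Definition admissible (k : nat) (w : seq nat) : bool :=
  avoids w pat1234 && avoids w (pat1k k).

(* What must hold after the first 1: avoidance of 234 and k(k-1)...2. *)
Definition tail_admissible (k : nat) (s : seq nat) : bool :=
  avoids s (behead pat1234) && avoids s (behead (pat1k k)).

Definition tail_bound (k r : nat) : nat := r * 2 ^ (3 + k.-1).

(* Tail-admissible words are short: the Erdős–Szekeres bound for 234 and
   k(k-1)...2, seen as increasing and decreasing patterns shifted by one. *)
Lemma tail_admissible_size (k r : nat) (s : seq nat) : 3 <= k -> tail_admissible k s ->
  (forall y, count_mem y s <= r) -> size s <= tail_bound k r.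
Proof.
move=> k3 /andP [avoid234 avoid_dec] count_s.
have inc3 : behead pat1234 = map (addn 1) (iota 1 3) by [].
have dec : behead (pat1k k) = map (addn 1) (rev (iota 1 k.-1)).
  by rewrite /pat1k /= map_rev -iotaDl.
rewrite /avoids inc3 dec !contains_mapr in avoid234 avoid_dec;
  try by move=> ? ? _ _; rewrite ltn_add2l.
exact: leq_trans (leq_addr _ _) (size_avoiding_bound count_s avoid234 avoid_dec).
Qed.

Lemma admissible_insert_ones (k : nat) (u : seq nat) (m : bitseq) :
  all (fun x => 0 < x) u -> true \in m ->
  admissible k (insert_ones m (map S u)) =
  admissible k u && tail_admissible k (drop (index true m) u).
Proof.
move=> u_pos m_true.
have Su_gt1 : all (fun x => 1 < x) (map S u).
  by apply/allP => x /mapP [y y_u ->]; rewrite ltnS (allP u_pos).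
rewrite /admissible /tail_admissible /avoids -[pat1234]/(1 :: behead pat1234).
rewrite -[pat1k k]/(1 :: behead (pat1k k)) !contains_insert_ones //; last first.
  by apply/allP => x; rewrite /pat1k /= mem_rev mem_iota => /andP [].
rewrite -map_drop !contains_mapl; try by move=> ? ? _ _.
by case: (contains u _); case: (contains u _); case: (contains _ _); case: (contains _ _).
Qed.

Lemma tail_admissible_standardize (k i : nat) (w : seq nat) :
  tail_admissible k (drop i (standardize w)) = tail_admissible k (drop i w).
Proof.
have rank_mono : {in drop i w &, {mono rank_in w : x y / x < y}}.
  by move=> x y /mem_drop x_w /mem_drop y_w; apply: rank_in_mono.
by rewrite /standardize /tail_admissible /avoids -map_drop !contains_mapl.
Qed.

Lemma standardize_insert_ones (B : nat) (m : bitseq) (w : seq nat) :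
  all (fun x => 0 < x) w ->
  standardize (window B (insert_ones m (map S (standardize w)))) =
  standardize (window B (insert_ones m (map S w))).
Proof.
move=> w_pos; pose g y := if y == 1 then 1 else (rank_in w y.-1).+1.
have gS x : x \in w -> g x.+1 = (rank_in w x).+1.
  by rewrite /g; case: x => [/(allP w_pos)|].
have g1 : g 1 = 1 by [].
have -> : map S (standardize w) = map g (map S w).
  by rewrite /standardize -!map_comp; apply/eq_in_map => x x_w /=; rewrite gS.
rewrite -(@map_insert_ones g) // window_map standardize_map //.
have g_mono : {in insert_ones m (map S w) &, {mono g : x y / x < y}}.
  have rank_pos x : x \in w -> 0 < rank_in w x by case/rank_in_bound/andP.
  move=> y1 y2 /mem_insert_ones [->|/mapP [x1 x1_w ->]] /mem_insert_ones [->|/mapP [x2 x2_w ->]].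
  - by [].
  - by rewrite g1 (gS x2) // ltnS (rank_pos _ x2_w) ltnS (allP w_pos).
  - by rewrite g1 (gS x1) // !ltnS !ltn0.
  - by rewrite (gS x1) // (gS x2) // ltnS -/(rank_in w x1 < rank_in w x2) rank_in_mono.
by move=> y1 y2 /mem_drop y1_w /mem_drop y2_w; apply: g_mono.
Qed.

Lemma count_masks_late (P : pred bitseq) (c L t : nat) :
  (forall i m, i < c -> ~~ P (nseq i false ++ true :: m)) ->
  count P (masks (c + L) t) = count (fun m => P (nseq c false ++ m)) (masks L t).
Proof.
elim: c P => [|c IH] P early_false; first exact: eq_count.
rewrite addSn /= count_cat count_map.
have -> : count P (if t is t'.+1 then map (cons true) (masks (c + L) t') else [::]) = 0.
  case: {IH} t => [|t] //; rewrite count_map.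
  by apply/eqP; rewrite -leqn0 leqNgt -has_count; apply/hasPn => m _; apply: (early_false 0).
by rewrite (IH (fun m => P (false :: m))) // => i m lt_ic; apply: (early_false i.+1).
Qed.

Lemma window_insert_ones_nseq (B c : nat) (m : bitseq) (v : seq nat) :
  B <= size (drop c v) ->
  window B (insert_ones (nseq c false ++ m) v) = window B (insert_ones m (drop c v)).
Proof.
move=> le_B; rewrite insert_ones_nseq window_cat //.
by rewrite (perm_size (perm_insert_ones _ _)) size_cat (leq_trans le_B) ?leq_addl.
Qed.

(* transfer k r s t counts the ways to insert r new least letters into a word
   whose last tail_bound k r letters standardize to s, keeping it admissible,
   so that the new last letters standardize to t. *)
Definition transfer (k r : nat) (s t : seq nat) : nat :=
  count (fun m => tail_admissible k (drop (index true m) s) &&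
                  (standardize (window (tail_bound k r) (insert_ones m (map S s))) == t))
        (masks (tail_bound k r + r) r).

Definition state_count (k r n : nat) (s : seq nat) : nat :=
  count (fun w => admissible k w && (standardize (window (tail_bound k r) w) == s)) (words n r).

Section Transfer.

Variables (k r : nat).
Hypothesis k3 : 3 <= k.
Hypothesis r_pos : 0 < r.

Let B := tail_bound k r.

(* The admissible one-letter-larger words built from u, by window pattern t:
   none unless u is admissible, and then as many as transfer predicts, since
   the first inserted 1 must fall within the window of u. *)
Lemma count_extensions (n : nat) (u t : seq nat) : u \in words n r -> B <= n * r ->
  count (fun m => admissible k (insert_ones m (map S u)) &&
                  (standardize (window B (insert_ones m (map S u))) == t))
        (masks (n * r + r) r)
  = admissible k u * transfer k r (standardize (window B u)) t.
Proof.
move=> u_word le_B; have [size_u count_u pos_u] := word_props u_word.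
set c := n * r - B.
have window_u : window B u = drop c u by rewrite /window size_u.
have m_true m : m \in masks (n * r + r) r -> true \in m.
  by rewrite mem_masks => /andP [_ /eqP count_m]; apply: mask_true_mem; rewrite count_m.
case adm_u: (admissible k u); last first.
  rewrite mul0n (@eq_in_count _ _ pred0) ?count_pred0 // => m /m_true m1.
  by rewrite (admissible_insert_ones _ pos_u m1) adm_u.
rewrite mul1n (@eq_in_count _ _ (fun m => tail_admissible k (drop (index true m) u) &&
           (standardize (window B (insert_ones m (map S u))) == t))); last first.
  by move=> m /m_true m1; rewrite (admissible_insert_ones _ pos_u m1) adm_u.
have -> : n * r + r = c + (B + r) by rewrite /c; lia.
rewrite count_masks_late; last first.
  move=> i m lt_ic; rewrite index_cat mem_nseq andbF size_nseq /= addn0.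
  apply/negP => /andP [/(tail_admissible_size k3) tail_u _].
  have := tail_u r (fun y => leq_trans (leq_count_subseq _ (drop_subseq _ i)) (count_u y)).
  by rewrite size_drop size_u -/B; lia.
apply: eq_in_count => m _ /=.
rewrite index_cat mem_nseq andbF size_nseq addnC -drop_drop -window_u.
rewrite -tail_admissible_standardize window_insert_ones_nseq -?map_drop -?window_u.
- by rewrite standardize_insert_ones //; apply/allP => x /mem_drop /(allP pos_u).
- by rewrite size_map size_drop size_u /c; lia.
Qed.

Fixpoint bounded_seqs (b L : nat) : seq (seq nat) :=
  if L is L'.+1 then [seq x :: s | x <- iota 0 b.+1, s <- bounded_seqs b L'] else [:: [::]].

Lemma mem_bounded_seqs (b : nat) (s : seq nat) :
  all (fun x => x <= b) s -> s \in bounded_seqs b (size s).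
Proof.
elim: s => [|x s IH] // /andP [le_x le_s]; apply/allpairsP; exists (x, s); split => //=.
- by rewrite -[0 :: _]/(iota 0 b.+1) mem_iota add0n ltnS le_x.
- exact: IH.
Qed.

Lemma standardize_window_state (n : nat) (w : seq nat) :
  w \in words n r -> B <= n * r -> standardize (window B w) \in bounded_seqs B B.
Proof.
move=> /word_props [size_w _ _] le_B.
have size_win : size (window B w) = B by rewrite size_window // size_w.
rewrite -[X in bounded_seqs B X]size_win -[X in bounded_seqs B X](size_map (rank_in (window B w))).
apply: mem_bounded_seqs; apply/allP => _ /mapP [x x_win ->].
by case/andP: (rank_in_bound x_win); rewrite size_win.
Qed.

Lemma count_by_class (T : eqType) (P : pred T) (h : T -> seq nat) (s : seq T) (S : seq (seq nat)) :
  uniq S -> (forall w, w \in s -> P w -> h w \in S) ->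
  count P s = \sum_(x <- S) count (fun w => P w && (h w == x)) s.
Proof.
move=> uniq_S; elim: s => [|w s IH] h_S /=; first by rewrite big1.
rewrite big_split /= -IH => [|v v_s]; last by apply: h_S; rewrite in_cons v_s orbT.
congr (_ + _); case: (boolP (P w)) => P_w /=; last by rewrite big1.
rewrite (bigD1_seq (h w)) ?h_S ?mem_head //= eqxx big1 // => x.
by rewrite eq_sym => /negbTE ->.
Qed.

Lemma count_allpairs (P : pred (seq nat)) (f : seq nat -> bitseq -> seq nat) s t :
  count P [seq f u m | u <- s, m <- t] = \sum_(u <- s) count (fun m => P (f u m)) t.
Proof.
elim: s => [|u s IH]; first by rewrite big_nil.
by rewrite big_cons -IH /= count_cat count_map.
Qed.

Lemma state_count_succ (n : nat) (t : seq nat) : B <= n * r ->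
  state_count k r n.+1 t =
  \sum_(s <- undup (bounded_seqs B B)) state_count k r n s * transfer k r s t.
Proof.
move=> le_B; rewrite /state_count (permP (words_succ n r)) count_allpairs [LHS]big_seq.
under eq_bigr => u u_w do rewrite (count_extensions _ u_w le_B).
rewrite -big_seq.
under [RHS]eq_bigr => s _ do rewrite -sum1_count big_mkcond big_distrl /=.
rewrite exchange_big /= big_seq [RHS]big_seq; apply: eq_bigr => u u_w.
have state_u := standardize_window_state u_w le_B.
rewrite (bigD1_seq (standardize (window B u))) ?mem_undup ?undup_uniq //= eqxx andbT.
rewrite big1 ?addn0 // => s; rewrite eq_sym => /negbTE ->.
by rewrite andbF.
Qed.

End Transfer.

Theorem mainTheorem4 (k r : nat) (hk : (3 <= k)%N) (hr : (1 <= r)%N) :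
  linear_recurrent (d k r).
Proof.
pose B := tail_bound k r.
have le_B n : B <= n -> B <= n * r by move/leq_trans; apply; rewrite leq_pmulr.
apply: (@linear_recurrent_of_transfer _ (undup (bounded_seqs B B)) (state_count k r)
          (transfer k r) _ B).
-
  move=> n /le_B le_nB; change (count (admissible k) (words n r) =
    \sum_(s <- undup (bounded_seqs B B)) state_count k r n s).
  apply: count_by_class; first exact: undup_uniq.
  by move=> w w_word _; rewrite mem_undup (@standardize_window_state k r n w w_word le_nB).
- by move=> n /le_B le_nB t _; apply: state_count_succ.
Qed.
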